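(* Let $a_1,\dots,a_5$ and $\alpha_1,\dots,\alpha_5$ be positive real numbers with $\sum_{i=1}^5\alpha_i=\pi$. Then $$\sum_{i=1}^5 a_i\cos\alpha_i\;\le\;\frac{1+\sqrt5}{4}\cdot\frac{1}{a_1a_2a_3a_4a_5}\left(a_1^2a_2^2a_3^2+a_2^2a_3^2a_4^2+a_3^2a_4^2a_5^2+a_4^2a_5^2a_1^2+a_5^2a_1^2a_2^2\right).$$ *)

From Stdlib Require Import Reals.

(* Choose z_1, ..., z_5 > 0 whose consecutive products around the pentagon
   (taken in the order 1, 4, 2, 5, 3) are the a_i; the right-hand side is then
   (1 + sqrt 5)/4 * sum z_k^2.  Placing the vectors z_k e^{i s_k} in the plane at
   the cumulative angles s_k, each z_k z_(k+1) cos t_k is a dot product, and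
   because the angles add up to pi the cycle closes with a sign flip.  The
   resulting "twisted" cyclic quadratic form has largest eigenvalue
   cos (pi/5) = (1 + sqrt 5)/4, which a sum-of-squares identity certifies
   coordinatewise. *)

From Stdlib Require Import Reals Lra Psatz.
Open Scope R_scope.

(* cos (pi/5), the root of 4 c^2 = 2 c + 1 greater than 1/2. *)
Definition half_golden : R := (1 + sqrt 5) / 4.

Lemma half_golden_sq : 4 * half_golden * half_golden = 2 * half_golden + 1.
Proof.
  unfold half_golden.
  assert (H5 : sqrt 5 * sqrt 5 = 5) by (apply sqrt_sqrt; lra).
  nra.
Qed.

Lemma half_golden_gt_half : 1 / 2 < half_golden.
Proof.
  unfold half_golden.
  assert (1 < sqrt 5) by (rewrite <- sqrt_1; apply sqrt_lt_1; lra).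
  lra.
Qed.

Lemma twisted_pentagon_form_le (p1 p2 p3 p4 p5 : R) :
  p1 * p2 + p2 * p3 + p3 * p4 + p4 * p5 - p5 * p1
  <= half_golden * (p1 ^ 2 + p2 ^ 2 + p3 ^ 2 + p4 ^ 2 + p5 ^ 2).
Proof.
  set (c := half_golden).
  assert (Hc : 4 * c * c - 2 * c - 1 = 0) by (pose proof half_golden_sq; unfold c; lra).
  assert (Hc0 : 0 < c) by (pose proof half_golden_gt_half; unfold c; lra).
  set (t1 := 2 * c * p1 - p2 + p5).
  set (t2 := p2 - p3 + (2 * c - 1) * p5).
  set (t3 := p3 - 2 * c * p4 + p5).
  assert (Hsos : 4 * c * (c * (p1 ^ 2 + p2 ^ 2 + p3 ^ 2 + p4 ^ 2 + p5 ^ 2)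
                          - (p1 * p2 + p2 * p3 + p3 * p4 + p4 * p5 - p5 * p1))
                 = t1 ^ 2 + 2 * c * t2 ^ 2 + t3 ^ 2
                   + (4 * c * c - 2 * c - 1)
                     * (t3 ^ 2 - 4 * c ^ 2 * p4 ^ 2 - 2 * c * p5 ^ 2 + 4 * c * p3 * p4
                        + 4 * c * p4 * p5 + p2 ^ 2 + p5 ^ 2 - 2 * p2 * p5))
    by (unfold t1, t2, t3; ring).
  rewrite Hc, Rmult_0_l, Rplus_0_r in Hsos.
  assert (0 <= t1 ^ 2 + 2 * c * t2 ^ 2 + t3 ^ 2) by nra.
  nra.
Qed.

Lemma polar_mul_cos_sub (z w s t : R) :
  z * w * cos (t - s) = z * cos s * (w * cos t) + z * sin s * (w * sin t).
Proof. rewrite cos_minus; ring. Qed.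

Lemma sq_eq_polar (z s : R) : z ^ 2 = (z * cos s) ^ 2 + (z * sin s) ^ 2.
Proof. pose proof (sin2_cos2 s) as H; unfold Rsqr in H; nra. Qed.

Lemma twisted_pentagon_cos_le (z1 z2 z3 z4 z5 s1 s2 s3 s4 s5 : R) :
  z1 * z2 * cos (s2 - s1) + z2 * z3 * cos (s3 - s2) + z3 * z4 * cos (s4 - s3)
  + z4 * z5 * cos (s5 - s4) - z1 * z5 * cos (s5 - s1)
  <= half_golden * (z1 ^ 2 + z2 ^ 2 + z3 ^ 2 + z4 ^ 2 + z5 ^ 2).
Proof.
  rewrite !polar_mul_cos_sub.
  rewrite (sq_eq_polar z1 s1), (sq_eq_polar z2 s2), (sq_eq_polar z3 s3),
    (sq_eq_polar z4 s4), (sq_eq_polar z5 s5).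
  pose proof (twisted_pentagon_form_le (z1 * cos s1) (z2 * cos s2) (z3 * cos s3)
                (z4 * cos s4) (z5 * cos s5)).
  pose proof (twisted_pentagon_form_le (z1 * sin s1) (z2 * sin s2) (z3 * sin s3)
                (z4 * sin s4) (z5 * sin s5)).
  lra.
Qed.

Lemma pentagon_cos_le (z1 z2 z3 z4 z5 t1 t2 t3 t4 t5 : R) :
  t1 + t2 + t3 + t4 + t5 = PI ->
  z1 * z2 * cos t1 + z2 * z3 * cos t2 + z3 * z4 * cos t3 + z4 * z5 * cos t4
  + z5 * z1 * cos t5
  <= half_golden * (z1 ^ 2 + z2 ^ 2 + z3 ^ 2 + z4 ^ 2 + z5 ^ 2).
Proof.
  intro Hsum.
  pose proof (twisted_pentagon_cos_le z1 z2 z3 z4 z5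
                0 t1 (t1 + t2) (t1 + t2 + t3) (t1 + t2 + t3 + t4)) as H.
  replace (t1 - 0) with t1 in H by ring.
  replace (t1 + t2 - t1) with t2 in H by ring.
  replace (t1 + t2 + t3 - (t1 + t2)) with t3 in H by ring.
  replace (t1 + t2 + t3 + t4 - (t1 + t2 + t3)) with t4 in H by ring.
  replace (t1 + t2 + t3 + t4 - 0) with (PI - t5) in H by lra.
  rewrite cos_minus, cos_PI, sin_PI in H.
  lra.
Qed.

Lemma sq_div_nonneg (x p : R) : 0 < p -> 0 <= x ^ 2 / p.
Proof.
  intro Hp; apply Rmult_le_pos; [apply pow2_ge_0 | left; apply Rinv_0_lt_compat; exact Hp].
Qed.

Lemma sqrt_sq_div_mul (x y p a : R) :
  0 < p -> 0 <= a -> x * y = a * p -> sqrt (x ^ 2 / p) * sqrt (y ^ 2 / p) = a.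
Proof.
  intros Hp Ha Hxy.
  rewrite <- sqrt_mult_alt by (apply sq_div_nonneg; exact Hp).
  replace (x ^ 2 / p * (y ^ 2 / p)) with ((x * y) ^ 2 / (p * p)) by (field; lra).
  rewrite Hxy.
  replace ((a * p) ^ 2 / (p * p)) with (a ^ 2) by (field; lra).
  apply sqrt_pow2; assumption.
Qed.

Theorem theorem2 (a1 a2 a3 a4 a5 al1 al2 al3 al4 al5 : R)
  (ha1 : 0 < a1) (ha2 : 0 < a2) (ha3 : 0 < a3) (ha4 : 0 < a4) (ha5 : 0 < a5)
  (hal1 : 0 < al1) (hal2 : 0 < al2) (hal3 : 0 < al3) (hal4 : 0 < al4) (hal5 : 0 < al5)
  (hsum : al1 + al2 + al3 + al4 + al5 = PI) :
  a1 * cos al1 + a2 * cos al2 + a3 * cos al3 + a4 * cos al4 + a5 * cos al5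
  <= (1 + sqrt 5) / 4 * (1 / (a1 * a2 * a3 * a4 * a5)) *
     (a1^2 * a2^2 * a3^2 + a2^2 * a3^2 * a4^2 + a3^2 * a4^2 * a5^2
      + a4^2 * a5^2 * a1^2 + a5^2 * a1^2 * a2^2).
Proof.
  set (p := a1 * a2 * a3 * a4 * a5).
  assert (Hp : 0 < p) by (unfold p; repeat apply Rmult_lt_0_compat; assumption).
  pose proof (pentagon_cos_le (sqrt ((a1 * a2 * a3) ^ 2 / p)) (sqrt ((a4 * a5 * a1) ^ 2 / p))
                (sqrt ((a2 * a3 * a4) ^ 2 / p)) (sqrt ((a5 * a1 * a2) ^ 2 / p))
                (sqrt ((a3 * a4 * a5) ^ 2 / p)) al1 al4 al2 al5 al3 ltac:(lra)) as H.
  rewrite (sqrt_sq_div_mul _ _ _ a1), (sqrt_sq_div_mul _ _ _ a4), (sqrt_sq_div_mul _ _ _ a2),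
    (sqrt_sq_div_mul _ _ _ a5), (sqrt_sq_div_mul _ _ _ a3) in H
    by (lra || (unfold p; ring)).
  rewrite !pow2_sqrt in H by (apply sq_div_nonneg; exact Hp).
  replace ((1 + sqrt 5) / 4 * (1 / p) *
           (a1^2 * a2^2 * a3^2 + a2^2 * a3^2 * a4^2 + a3^2 * a4^2 * a5^2
            + a4^2 * a5^2 * a1^2 + a5^2 * a1^2 * a2^2))
    with (half_golden * ((a1 * a2 * a3) ^ 2 / p + (a4 * a5 * a1) ^ 2 / p
            + (a2 * a3 * a4) ^ 2 / p + (a5 * a1 * a2) ^ 2 / p + (a3 * a4 * a5) ^ 2 / p))
    by (unfold half_golden; field; lra).
  lra.
Qed.
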